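(* Let $\mathcal{F}$ be a hypothesis class of functions $\mathcal{X}\to\{\pm1\}$ with finite VC dimension $d$, and $\mathcal{P}$ an unknown distribution on $\mathcal{X}\times\{\pm1\}$. Consider a run of Active-ILESS with confidence $\delta$ and suppose the event $\mathcal{K}$ occurred. Then every true risk minimizer $f^*$ of the original distribution $\mathcal{P}$ belongs to $G_t$ for all $t$. Consequently $R_{\mathcal{P}(G_t)}(f^* )\le R(f^* )$ for all $t$.
   Context: $R(f)=R_{\mathcal{P}}(f)=\Pr_{\mathcal{P}}[f(X)\ne Y]$; $\hat R(f,S)$ is the fraction of examples of $S$ misclassified by $f$; $f^*$ is any minimizer of $R$ over $\mathcal{F}$. Slacks: for $n>0$, $\delta'\in(0,1)$, $A=4d\ln\frac{16ne}{d\delta'}$, $\hat\sigma_{R-\hat R}(n,\delta',d,\hat r)=\frac{A}{n}+\sqrt{\frac{A}{n}\hat r}$, $\bar\sigma_{R-\hat R}(n,\delta',d,r)=\sqrt{\frac{A}{n}r}$, $\bar\sigma_{\hat R-R}(n,\delta',d,r)=\frac{A}{n}+\sqrt{\frac{A}{n}r}$, $\hat\sigma_{\hat R-R}(n,\delta',d,\hat r)=\sqrt{\frac{A}{n}\hat r}$, $\sigma_{R-\hat R}=\min\{\hat\sigma_{R-\hat R}(\cdot,\hat r),\bar\sigma_{R-\hat R}(\cdot,r)\}$, $\sigma_{\hat R-R}=\min\{\bar\sigma_{\hat R-R}(\cdot,r),\hat\sigma_{\hat R-R}(\cdot,\hat r)\}$. $AGR(G)=\{x:\text{all }f\in G\text{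 agree on }x\}$. Active-ILESS (inputs: $\epsilon$ and/or budget $m$, confidence $\delta$, $\mathcal{F}$, $d$, i.i.d. stream $x_1,x_2,\dots$ from $\mathcal{P}$): initialize $\hat S=\emptyset$, $G_0=\mathcal{F}$, $t=1$; for each $x_t$: if $x_t\in AGR(G_{t-1})$ do not request its label and set $y_t=f(x_t)$ for any $f\in G_{t-1}$, otherwise request the true label $y_t$; add $(x_t,y_t)$ to $\hat S$; let $\hat f$ be an ERM on $\hat S$; if $\log_2t\in\mathbb{N}$: set $\sigma_{\rm Active}=\hat\sigma_{R-\hat R}(\tfrac t2,\tfrac\delta{2t},d,\hat R(\hat f,\hat S))+\bar\sigma_{\hat R-R}\big(\tfrac t2,\tfrac\delta{2t},d,\hat R(\hat f,\hat S)+\hat\sigma_{R-\hat R}(\tfrac t2,\tfrac\delta{2t},d,\hat R(\hat f,\hat S))\big)$, terminate returning $\hat f$ if $\epsilon$ was given and $\sigma_{\rm Active}<\epsilon$, set $G_t=\{f:\hat R(f,\hat S)\le\hat R(\hat f,\hat S)+\sigma_{\rm Active}\}$ and reset $\hat S=\emptyset$; otherwise $G_t=G_{t-1}$; if $m$ was given and $t=m$ terminate returning $\hat f$; increment $t$. For $G\subseteq\mathcal{F}$, $\mathcal{P}(G)$ is the distribution of $(X,Y')$ with $(X,Y)\sim\mathcal{P}$, $Y'$ = common value of $G$ at $X$ if $X\in AGR(G)$ and $Y'=Y$ otherwise; $R_{\mathcal{P}(G)}(f)=\Pr[f(X)\ne Y']$. Event $\mathcal{K}$: for every $t=2^i$ reached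 and every $f\in\mathcal{F}$, with $\hat R(f)=\hat R(f,\hat S)$ for $\hat S$ at iteration $t$ before reset, $R_{\mathcal{P}(G_{t-1})}(f)\le\hat R(f)+\sigma_{R-\hat R}(\tfrac t2,\tfrac\delta{2t},d,R_{\mathcal{P}(G_{t-1})}(f),\hat R(f))$ and $\hat R(f)\le R_{\mathcal{P}(G_{t-1})}(f)+\sigma_{\hat R-R}(\tfrac t2,\tfrac\delta{2t},d,R_{\mathcal{P}(G_{t-1})}(f),\hat R(f))$. *)

From HB Require Import structures.
From mathcomp Require Import all_boot all_order all_algebra.
From mathcomp Require Import all_classical all_reals all_analysis.
Set Implicit Arguments. Unset Strict Implicit. Unset Printing Implicit Defensive.
Import Order.TTheory GRing.Theory Num.Theory.
Local Open Scope classical_set_scope.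
Local Open Scope ring_scope.

Definition shatters_size (X : Type) (F : set (X -> bool)) (n : nat) : Prop :=
  exists s : 'I_n -> X, injective s /\
    forall lab : 'I_n -> bool, exists f, F f /\ forall i, f (s i) = lab i.

Definition VC_dim (X : Type) (F : set (X -> bool)) (d : nat) : Prop :=
  shatters_size F d /\ ~ shatters_size F d.+1.

(* labels +-1 are represented by bool *)
Definition risk (d0 : measure_display) (X : measurableType d0) (R : realType)
  (P : probability (X * bool)%type R) (f : X -> bool) : R :=
  fine (P [set z | f z.1 != z.2]).

Definition AGR (X : Type) (G : set (X -> bool)) : set X :=
  [set x | forall f g, G f -> G g -> f x = g x].

(* R_{P(G)}(f) = Pr[f(X) <> Y'] where Y' is the common value of G at X
   if X \in AGR(G), and Y' = Y otherwise. *)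
Definition riskPG (d0 : measure_display) (X : measurableType d0) (R : realType)
  (P : probability (X * bool)%type R) (G : set (X -> bool)) (f : X -> bool) : R :=
  fine (P [set z | (AGR G z.1 /\ exists g, G g /\ f z.1 != g z.1)
                   \/ (~ AGR G z.1 /\ f z.1 != z.2)]).

Definition emp_risk (X : Type) (R : realType) (f : X -> bool) (S : seq (X * bool)) : R :=
  (count (fun z => f z.1 != z.2) S)%:R / (size S)%:R.

Section Slacks.
Variable R : realType.
Definition Aterm (n delta' : R) (d : nat) : R :=
  4 * d%:R * ln (16 * n * expR 1 / (d%:R * delta')).
Definition sig_hat_RmR (n delta' : R) (d : nat) (rh : R) : R :=
  Aterm n delta' d / n + Num.sqrt (Aterm n delta' d / n * rh).
Definition sig_bar_RmR (n delta' : R) (d : nat) (r : R) : R :=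
  Num.sqrt (Aterm n delta' d / n * r).
Definition sig_bar_hRmR (n delta' : R) (d : nat) (r : R) : R :=
  Aterm n delta' d / n + Num.sqrt (Aterm n delta' d / n * r).
Definition sig_hat_hRmR (n delta' : R) (d : nat) (rh : R) : R :=
  Num.sqrt (Aterm n delta' d / n * rh).
Definition sig_RmR (n delta' : R) (d : nat) (r rh : R) : R :=
  Num.min (sig_hat_RmR n delta' d rh) (sig_bar_RmR n delta' d r).
Definition sig_hRmR (n delta' : R) (d : nat) (r rh : R) : R :=
  Num.min (sig_bar_hRmR n delta' d r) (sig_hat_hRmR n delta' d rh).
End Slacks.

Definition pow2b (t : nat) : bool := (0 < t)%N && (2 ^ trunc_log 2 t == t)%N.

(* the sample \hat S at the end of iteration t (before a possible reset at t),
   given the stream x and the labels lab assigned by the algorithm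
   (pseudo-labels on the agreement region, true labels otherwise);
   \hat S is reset after every iteration t with log_2 t in N. *)
Fixpoint Shat (X : Type) (x : nat -> X) (lab : nat -> bool) (t : nat) : seq (X * bool) :=
  match t with
  | 0 => [::]
  | t'.+1 => rcons (if pow2b t' then [::] else Shat x lab t') (x t'.+1, lab t'.+1)
  end.

Definition sigma_active (R : realType) (d : nat) (delta : R) (t : nat) (rh : R) : R :=
  let n := t%:R / 2 in let dl := delta / (2 * t%:R) in
  sig_hat_RmR n dl d rh + sig_bar_hRmR n dl d (rh + sig_hat_RmR n dl d rh).

(* (x, y, lab, fhat, G) is a run of Active-ILESS on F with parameters d, delta,
   for iterations t = 1 .. T (G t = G_t, fhat t = ERM computed at iteration t). *)
Definition ILESS_run (X : Type) (R : realType) (F : set (X -> bool)) (d : nat) (delta : R)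
  (x : nat -> X) (y : nat -> bool) (lab : nat -> bool) (fhat : nat -> X -> bool)
  (G : nat -> set (X -> bool)) (T : nat) : Prop :=
  G 0 = F /\
  forall t, (1 <= t <= T)%N ->
    (AGR (G t.-1) (x t) -> exists g, G t.-1 g /\ lab t = g (x t)) /\
    (~ AGR (G t.-1) (x t) -> lab t = y t) /\
    (F (fhat t) /\ forall f, F f ->
       emp_risk R (fhat t) (Shat x lab t) <= emp_risk R f (Shat x lab t)) /\
    G t = (if pow2b t then
             [set f | F f /\ emp_risk R f (Shat x lab t) <=
                emp_risk R (fhat t) (Shat x lab t)
                + sigma_active d delta t (emp_risk R (fhat t) (Shat x lab t))]
           else G t.-1).

Definition event_K (d0 : measure_display) (X : measurableType d0) (R : realType)
  (P : probability (X * bool)%type R) (F : set (X -> bool)) (d : nat) (delta : R)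
  (x : nat -> X) (lab : nat -> bool) (G : nat -> set (X -> bool)) (T : nat) : Prop :=
  forall t, (1 <= t <= T)%N -> pow2b t -> forall f, F f ->
    let n := t%:R / 2 in let dl := delta / (2 * t%:R) in
    let r := riskPG P (G t.-1) f in let rh := emp_risk R f (Shat x lab t) in
    r <= rh + sig_RmR n dl d r rh /\ rh <= r + sig_hRmR n dl d r rh.

From HB Require Import structures.
From mathcomp Require Import all_boot all_order all_algebra.
From mathcomp Require Import all_classical all_reals all_analysis.
From mathcomp Require Import lra.
Set Implicit Arguments. Unset Strict Implicit. Unset Printing Implicit Defensive.
Import Order.TTheory GRing.Theory Num.Theory.
Local Open Scope classical_set_scope.
Local Open Scope ring_scope.

(* Induction on t, for a risk minimiser f* of P.  Pseudo-labelling by a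
   version space G containing f* cannot shrink excess risks: on the agreement
   region f* is charged nothing while any f is charged its disagreement with
   f*, so  R f - R f* <= R_P(G) f - R_P(G) f*.  Hence f* also minimises the
   risk under P(G_{t-1}) and in particular beats the ERM fhat there.  Chaining
   the two inequalities of event K, for f* and for fhat, through this
   comparison gives  Rhat f* <= Rhat fhat + sigma_Active,  so f* survives into
   G_t.  Finally R_P(G) f* only counts the errors of f* outside the agreement
   region of G, hence is at most R f*. *)

Section real_probability.
Context (d : measure_display) (T : measurableType d) (R : realType)
  (P : probability T R).

Lemma fine_measure_le A B : measurable A -> measurable B -> A `<=` B ->
  fine (P A) <= fine (P B).
Proof.
move=> mA mB AB; apply: fine_le; rewrite ?fin_num_measure //.
by apply: le_measure; rewrite ?inE.
Qed.

Lemma fine_measureU A B : measurable A -> measurable B -> A `&` B = set0 ->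
  fine (P (A `|` B)) = fine (P A) + fine (P B).
Proof. by move=> mA mB AB; rewrite measureU // fineD ?fin_num_measure. Qed.

Lemma fine_measureU_le A B : measurable A -> measurable B ->
  fine (P (A `|` B)) <= fine (P A) + fine (P B).
Proof.
move=> mA mB; rewrite -fineD ?fin_num_measure //.
apply: fine_le; rewrite ?fin_numD ?fin_num_measure //; last exact: measureU2.
exact: measurableU.
Qed.

Lemma fine_measure_splitI A E : measurable A -> measurable E ->
  fine (P E) = fine (P (A `&` E)) + fine (P (~` A `&` E)).
Proof.
move=> mA mE; rewrite -fine_measureU; last by rewrite setIACA setICr set0I.
- by rewrite -setIUl setUv setTI.
- exact: measurableI.
- by apply: measurableI => //; exact: measurableC.
Qed.

Lemma measurable_neq (g h : T -> bool) :
  measurable_fun setT g -> measurable_fun setT h -> measurable [set z | g z != h z].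
Proof.
move=> mg mh.
have mgh : measurable_fun setT (fun z => g z && ~~ h z || ~~ g z && h z).
  by apply: measurable_or; apply: measurable_and => //; apply: measurable_neg.
rewrite (_ : [set z | _] =
    setT `&` (fun z => g z && ~~ h z || ~~ g z && h z) @^-1` [set true]).
  exact: mgh.
by apply/seteqP; split=> z /=; case: (g z); case: (h z) => //; case.
Qed.

End real_probability.

Section pseudo_labelling.
Context (d : measure_display) (X : measurableType d) (R : realType)
  (P : probability (X * bool)%type R) (G : set (X -> bool)) (g : X -> bool).
Hypotheses (mAGR : measurable (AGR G)) (Gg : G g) (mg : measurable_fun setT g).

Let agree := [set z : X * bool | AGR G z.1].
Let mistake (f : X -> bool) := [set z : X * bool | f z.1 != z.2].
Let disagree (f : X -> bool) := [set z : X * bool | f z.1 != g z.1].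

Let measurable_agree : measurable agree.
Proof. by have := @measurable_fst _ _ X bool measurableT _ mAGR; rewrite setTI. Qed.

Let measurable_fst_comp (f : X -> bool) :
  measurable_fun setT f -> measurable_fun setT (fun z : X * bool => f z.1).
Proof. by move=> mf; apply: measurableT_comp mf _; exact: measurable_fst. Qed.

Let measurable_mistake (f : X -> bool) :
  measurable_fun setT f -> measurable (mistake f).
Proof.
by move=> mf; apply: measurable_neq; [exact: measurable_fst_comp|exact: measurable_snd].
Qed.

Let measurable_disagree (f : X -> bool) :
  measurable_fun setT f -> measurable (disagree f).
Proof. by move=> mf; apply: measurable_neq; exact: measurable_fst_comp. Qed.

Lemma riskPG_split (f : X -> bool) : measurable_fun setT f ->
  riskPG P G f = fine (P (agree `&` disagree f)) + fine (P (~` agree `&` mistake f)).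
Proof.
move=> mf; rewrite /riskPG -fine_measureU; first last.
- by rewrite setIACA setICr set0I.
- by apply: measurableI; [exact: measurableC|exact: measurable_mistake].
- by apply: measurableI; [|exact: measurable_disagree].
congr (fine (P _)); apply/seteqP; split=> z; rewrite /agree /disagree /mistake /=.
  case=> [[Az [h [Gh fh]]]|]; last by right.
  by left; split=> //=; rewrite (Az g h Gg Gh).
by case=> [[Az fg]|]; [left; split=> //; exists g|right].
Qed.

Lemma riskPG_self : riskPG P G g = fine (P (~` agree `&` mistake g)).
Proof.
rewrite riskPG_split // (_ : disagree g = set0) ?setI0 ?measure0 ?add0r //.
by apply/seteqP; split=> z //; rewrite /disagree /= eqxx.
Qed.

Lemma riskPG_le_risk : riskPG P G g <= risk P g.
Proof.
rewrite riskPG_self; apply: fine_measure_le; last exact: subIsetr.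
- by apply: measurableI; [exact: measurableC|exact: measurable_mistake].
- exact: measurable_mistake.
Qed.

Lemma riskB_le_riskPGB (f : X -> bool) : measurable_fun setT f ->
  risk P f - risk P g <= riskPG P G f - riskPG P G g.
Proof.
move=> mf; rewrite riskPG_self riskPG_split // /risk.
rewrite -/(mistake f) -/(mistake g).
rewrite (fine_measure_splitI P measurable_agree (measurable_mistake mf)).
rewrite (fine_measure_splitI P measurable_agree (measurable_mistake mg)).
have mIf : measurable (agree `&` mistake f).
  by apply: measurableI => //; exact: measurable_mistake.
have mIg : measurable (agree `&` mistake g).
  by apply: measurableI => //; exact: measurable_mistake.
have mId : measurable (agree `&` disagree f).
  by apply: measurableI => //; exact: measurable_disagree.
have mistake_le : fine (P (agree `&` mistake f)) <=
    fine (P (agree `&` mistake g)) + fine (P (agree `&` disagree f)).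
  apply: le_trans (fine_measureU_le P mIg mId).
  apply: fine_measure_le => //; first exact: measurableU.
  move=> z [Az]; rewrite /mistake /disagree /= => fz.
  have [gz|/negPn/eqP gz] := boolP (g z.1 != z.2); first by left.
  by right; split; rewrite //= gz.
lra.
Qed.

End pseudo_labelling.

Section slacks.
Variable R : realType.

Lemma sig_bar_hRmR_le (n dl : R) d a b : 0 <= a -> a <= b ->
  sig_bar_hRmR n dl d a <= sig_bar_hRmR n dl d b.
Proof.
move=> a0 ab; rewrite /sig_bar_hRmR lerD2l.
have [c0|c_lt0] := leP 0 (Aterm n dl d / n).
  by apply: ler_wsqrtr; exact: ler_wpM2l.
by rewrite ler0_sqrtr ?sqrtr_ge0 //; nra.
Qed.

(* The bound is [rh' + sigma_active d delta t rh'] with its [let]s unfolded,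
   for [n = t/2] and [dl = delta/(2t)]. *)
Lemma emp_risk_le_add_slack (n dl : R) d r r' rh rh' :
  0 <= r -> r <= r' ->
  r' <= rh' + sig_RmR n dl d r' rh' -> rh <= r + sig_hRmR n dl d r rh ->
  rh <= rh' + (sig_hat_RmR n dl d rh'
                + sig_bar_hRmR n dl d (rh' + sig_hat_RmR n dl d rh')).
Proof.
move=> r0 rr' r'_le rh_le.
have hat_le : r <= rh' + sig_hat_RmR n dl d rh'.
  by apply: le_trans rr' (le_trans r'_le _); rewrite lerD2l ge_min lexx.
have := sig_bar_hRmR_le n dl d r0 hat_le.
have : sig_hRmR n dl d r rh <= sig_bar_hRmR n dl d r by rewrite ge_min lexx.
lra.
Qed.

End slacks.

Section active_iless_run.
Context (d0 : measure_display) (X : measurableType d0) (R : realType)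
  (P : probability (X * bool)%type R) (F : set (X -> bool)) (d : nat) (delta : R)
  (x : nat -> X) (y : nat -> bool) (lab : nat -> bool) (fhat : nat -> X -> bool)
  (G : nat -> set (X -> bool)) (T : nat) (fstar : X -> bool).
Hypotheses (mF : forall f, F f -> measurable_fun setT f)
  (mAGR : forall t, (t <= T)%N -> measurable (AGR (G t)))
  (run : ILESS_run F d delta x y lab fhat G T)
  (K : event_K P F d delta x lab G T)
  (Ffstar : F fstar) (fstar_min : forall f, F f -> risk P fstar <= risk P f).

Lemma riskPG_minimizer t f : (t <= T)%N -> G t fstar -> F f ->
  riskPG P (G t) fstar <= riskPG P (G t) f.
Proof.
move=> tT Gt Ff.
have := riskB_le_riskPGB P (mAGR tT) Gt (mF Ffstar) (mF Ff).
have := fstar_min Ff.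
lra.
Qed.

Lemma minimizer_mem_G_succ t : (t < T)%N -> G t fstar -> G t.+1 fstar.
Proof.
move=> tT Gt; have tT' : (1 <= t.+1 <= T)%N by [].
have [_ [_ [[Ffhat _] ->]]] := run.2 t.+1 tT'.
case: ifP => // p2; split=> //.
have [_ Kstar] := K tT' p2 Ffstar; have [Khat _] := K tT' p2 Ffhat.
apply: emp_risk_le_add_slack Khat Kstar; first exact/fine_ge0/measure_ge0.
exact: riskPG_minimizer (ltnW tT) Gt Ffhat.
Qed.

Lemma minimizer_mem_G t : (t <= T)%N -> G t fstar.
Proof.
elim: t => [|t IH] tT; first by rewrite run.1.
exact: minimizer_mem_G_succ tT (IH (ltnW tT)).
Qed.

End active_iless_run.

Theorem lemma11 (d0 : measure_display) (X : measurableType d0) (R : realType)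
  (P : probability (X * bool)%type R) (F : set (X -> bool)) (d : nat) (delta : R)
  (x : nat -> X) (y : nat -> bool) (lab : nat -> bool) (fhat : nat -> X -> bool)
  (G : nat -> set (X -> bool)) (T : nat) :
  VC_dim F d ->
  (forall f, F f -> measurable_fun setT f) ->
  (forall t, (t <= T)%N -> measurable (AGR (G t))) ->
  0 < delta < 1 ->
  ILESS_run F d delta x y lab fhat G T ->
  event_K P F d delta x lab G T ->
  forall fstar, F fstar -> (forall f, F f -> risk P fstar <= risk P f) ->
  forall t, (t <= T)%N -> G t fstar /\ riskPG P (G t) fstar <= risk P fstar.
Proof.
move=> _ mF mAGR _ run K fstar Ffstar fstar_min t tT.
have Gt := minimizer_mem_G mF mAGR run K Ffstar fstar_min tT.
by split; last exact: (riskPG_le_risk P (mAGR _ tT) Gt (mF _ Ffstar)).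
Qed.
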